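(* Let $\mathcal{H}_O\simeq\mathbb{C}^{d_O}$ and $\mathcal{H}_R\simeq\mathbb{C}^{d_R}$. Let $H_R=\sum_{m=1}^{d_R}\lambda_m^{\uparrow}|\xi_m\rangle\langle\xi_m|$ with $\lambda_1^\uparrow\leqslant\dots\leqslant\lambda_{d_R}^\uparrow$ and $\{|\xi_m\rangle\}$ an orthonormal basis of $\mathcal{H}_R$; let $\beta\in(0,\infty)$ and $\rho_R(\beta)=e^{-\beta H_R}/\mathrm{tr}[e^{-\beta H_R}]=\sum_m r_m^{\downarrow}|\xi_m\rangle\langle\xi_m|$. Let $\rho_O=\sum_{l=1}^{d_O}o_l^{\downarrow}|\varphi_l\rangle\langle\varphi_l|$ be a density operator on $\mathcal{H}_O$ with $o_1^\downarrow\geqslant\dots\geqslant o_{d_O}^\downarrow$ and $\{|\varphi_l\rangle\}$ an orthonormal basis. Write $\rho=\rho_O\otimes\rho_R(\beta)=\sum_{n=1}^{d_Od_R}p_n^{\downarrow}|\psi_n\rangle\langle\psi_n|$, where $(p_n^\downarrow)_n$ is the non-increasing rearrangement of $(o_l^\downarrow r_m^\downarrow)_{l,m}$ and $(|\psi_n\rangle)_n$ the correspondingly rearranged family $(|\varphi_l\rangle\otimes|\xi_m\rangle)_{l,m}$. For a unitary $U$ on $\mathcal{H}_O\otimes\mathcal{H}_R$ define the heat $\Delta Q(U)=\mathrm{tr}[H_R(\mathrm{tr}_O[U\rho U^\dagger]-\rho_R(\beta))]$. Suppose $U_{\mathrm{maj}}^f$ is a unitary such that, for every $m\in\{1,\dots,d_R\}$,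 there is an orthonormal basis $\{|\varphi_l^m\rangle\}_{l=1}^{d_O}$ of $\mathcal{H}_O$ with $$U_{\mathrm{maj}}^f|\psi_{(m-1)d_O+l}\rangle=|\varphi_l^m\rangle\otimes|\xi_m\rangle\quad\text{for all } l\in\{1,\dots,d_O\}.$$ Then $\Delta Q(U_{\mathrm{maj}}^f)\leqslant\Delta Q(U)$ for every unitary $U$ on $\mathcal{H}_O\otimes\mathcal{H}_R$.
   Context: $\mathrm{tr}_O$ denotes the partial trace over $\mathcal{H}_O$. *)

From HB Require Import structures.
From mathcomp Require Import all_boot all_order all_algebra.
From mathcomp Require Import reals sequences exp.
From mathcomp Require Export complex mxtens.
Set Implicit Arguments.
Unset Strict Implicit.
Unset Printing Implicit Defensive.
Import Order.TTheory GRing.Theory Num.Theory.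
Local Open Scope ring_scope.
Local Open Scope complex_scope.

Section QDefs.
Variable R : realType.
Local Notation C := R[i].

Definition RtoC (x : R) : C := x%:C.

Definition adjmx {m n} (A : 'M[C]_(m, n)) : 'M[C]_(n, m) :=
  (map_mx Num.conj A)^T.

Definition ketbra {d} (u v : 'cV[C]_d) : 'M[C]_d := u *m adjmx v.

Definition onb {d} (v : 'I_d -> 'cV[C]_d) : Prop :=
  forall i j, adjmx (v i) *m v j = (i == j)%:R%:M.

Definition qunitary {d} (U : 'M[C]_d) : Prop :=
  U *m adjmx U = 1%:M /\ adjmx U *m U = 1%:M.

(* tensor product of vectors |u> (x) |v> ; index (l, m) |-> l * dR + m *)
Definition tensv {dO dR} (u : 'cV[C]_dO) (v : 'cV[C]_dR) : 'cV[C]_(dO * dR) :=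
  castmx (erefl, muln1 1) (u *t v).

Definition ptrO {dO dR} (X : 'M[C]_(dO * dR)) : 'M[C]_dR :=
  \matrix_(j, k) \sum_(i < dO) X (mxtens_index (i, j)) (mxtens_index (i, k)).

Definition specop {d} (w : 'I_d -> R) (v : 'I_d -> 'cV[C]_d) : 'M[C]_d :=
  \sum_(k < d) RtoC (w k) *: ketbra (v k) (v k).

Definition gibbsw {dR} (beta : R) (lam : 'I_dR -> R) (m : 'I_dR) : R :=
  expR (- beta * lam m) / \sum_(k < dR) expR (- beta * lam k).

Definition qheat {dO dR} (HR rhoR : 'M[C]_dR) (rho U : 'M[C]_(dO * dR)) : C :=
  \tr (HR *m (ptrO (U *m rho *m adjmx U) - rhoR)).

(* block index: 0-based version of (m-1) d_O + l, i.e. m * dO + l *)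
Definition blk {dO dR} (m : 'I_dR) (l : 'I_dO) : 'I_(dO * dR) :=
  cast_ord (mulnC dR dO) (mxtens_index (m, l)).

End QDefs.

(* In the product eigenbasis g of 1 (x) H_R, enumerated block by block so that
   its eigenvalues b_k are non-decreasing, the heat of a unitary U is
   sum_n p_n sum_k b_k D_nk - tr[H_R rho_R] with D_nk = |<g_k|U psi_n>|^2,
   and D is doubly stochastic.  U_maj maps psi_n into the eigenspace of the
   n-th block, so for it sum_k b_k D_nk = b_n.  The claim is then the
   rearrangement inequality sum_n p_n b_n <= sum_n p_n sum_k b_k D_nk for
   non-increasing p >= 0, non-decreasing b and doubly stochastic D, which
   Abel summation reduces to the same inequality for prefix sums over n. *)

From HB Require Import structures.
From mathcomp Require Import all_boot all_order all_algebra.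
From mathcomp Require Import reals sequences exp.
From mathcomp Require Import complex mxtens.
From mathcomp Require Import ring.
Import Order.TTheory GRing.Theory Num.Theory.
Local Open Scope ring_scope.

Lemma sum_decrements {V : zmodType} (P : nat -> V) n N :
  (n <= N)%N -> P N = 0 -> \sum_(n <= j < N) (P j - P j.+1) = P n.
Proof.
move=> le_nN PN0; rewrite (eq_bigr (fun j => - (P j.+1 - P j))) => [|j _].
  by rewrite sumrN telescope_sumr // PN0 sub0r opprK.
by rewrite opprB.
Qed.

Section DoublyStochastic.
Variable T : numDomainType.

Definition doubly_stochastic {N} (D : 'I_N -> 'I_N -> T) : Prop :=
  [/\ forall n k, 0 <= D n k, forall n, \sum_k D n k = 1 & forall k, \sum_n D n k = 1].

Lemma ler_prefix_sum_stochastic N (D : 'I_N -> 'I_N -> T) (b : 'I_N -> T)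
    (j : 'I_N) :
  doubly_stochastic D -> {homo b : x y / (x <= y)%N >-> x <= y} ->
  \sum_(n : 'I_N | (n <= j)%N) b n <=
  \sum_(n : 'I_N | (n <= j)%N) \sum_k b k * D n k.
Proof.
move=> [D_ge0 D_row D_col] b_homo; rewrite -subr_ge0.
pose x k := \sum_(n : 'I_N | (n <= j)%N) D n k.
pose e k : T := ((k <= j)%N)%:R.
have -> : \sum_(n : 'I_N | (n <= j)%N) \sum_k b k * D n k = \sum_k b k * x k.
  by rewrite exchange_big; apply: eq_bigr => k _; rewrite mulr_sumr.
have -> : \sum_(n : 'I_N | (n <= j)%N) b n = \sum_k b k * e k.
  rewrite big_mkcond; apply: eq_bigr => k _.
  by rewrite /e; case: ifP; rewrite ?mulr1 ?mulr0.
have mass_balance : \sum_k (x k - e k) = 0.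
  rewrite sumrB /x exchange_big (eq_bigr (fun _ => 1)) // big_mkcond /=.
  by apply/eqP; rewrite subr_eq0; apply/eqP/eq_bigr => k _; rewrite /e; case: ifP.
(* Subtracting the constant b j makes every summand nonnegative. *)
have -> : \sum_k b k * x k - \sum_k b k * e k =
    \sum_k (b k - b j) * (x k - e k) + b j * \sum_k (x k - e k).
  rewrite -sumrB mulr_sumr -big_split; apply: eq_bigr => k _ /=; ring.
rewrite mass_balance mulr0 addr0; apply: sumr_ge0 => k _; rewrite /e.
case: (leqP k j) => [le_kj | lt_jk].
  apply: mulr_le0; first by rewrite subr_le0 b_homo.
  rewrite subr_le0 -(D_col k) [leRHS](bigID (fun n : 'I_N => (n <= j)%N)) /= lerDl.
  exact: sumr_ge0.
by rewrite subr0 mulr_ge0 ?sumr_ge0 // subr_ge0 b_homo // ltnW.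
Qed.

Lemma rearrangement_doubly_stochastic N (D : 'I_N -> 'I_N -> T) (p b : 'I_N -> T) :
  doubly_stochastic D ->
  {homo p : x y / (x <= y)%N >-> y <= x} -> (forall n, 0 <= p n) ->
  {homo b : x y / (x <= y)%N >-> x <= y} ->
  \sum_n p n * b n <= \sum_n p n * \sum_k b k * D n k.
Proof.
case: N D p b => [|N] D p b D_ds p_homo p_ge0 b_homo; first by rewrite !big_ord0.
pose P j := if (j < N.+1)%N then p (inord j) else 0.
pose c (j : 'I_N.+1) := P j - P j.+1.
have PE (n : 'I_N.+1) : P n = p n by rewrite /P ltn_ord inord_val.
have c_ge0 j : 0 <= c j.
  rewrite /c PE /P; case: ifP => [lt_jN|_]; last by rewrite subr0.
  by rewrite subr_ge0 p_homo // inordK.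
(* Abel summation: p n is the sum of the nonnegative decrements c j over j >= n. *)
have pE (n : 'I_N.+1) : p n = \sum_(j : 'I_N.+1 | (n <= j)%N) c j.
  rewrite -PE -(@sum_decrements _ P n N.+1 (ltnW (ltn_ord n))); last by rewrite /P ltnn.
  by rewrite (big_geq_mkord n N.+1 xpredT (fun j => P j - P j.+1)).
rewrite -subr_ge0 -sumrB.
have -> : \sum_n (p n * \sum_k b k * D n k - p n * b n) =
   \sum_j c j * (\sum_(n : 'I_N.+1 | (n <= j)%N) \sum_k b k * D n k -
                 \sum_(n : 'I_N.+1 | (n <= j)%N) b n).
  under eq_bigr => n _ do rewrite -mulrBr pE mulr_suml big_mkcond /=.
  rewrite exchange_big /=; apply: eq_bigr => j _.
  rewrite -sumrB mulr_sumr [RHS]big_mkcond /=; apply: eq_bigr => n _.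
  by case: ifP; rewrite ?mulr0.
apply: sumr_ge0 => j _; rewrite mulr_ge0 // subr_ge0.
exact: ler_prefix_sum_stochastic.
Qed.

End DoublyStochastic.
Arguments doubly_stochastic {T N} D.

Section InnerProduct.
Context {R : realType}.
Local Notation C := R[i].

Definition inner {d} (u v : 'cV[C]_d) : C := (adjmx u *m v) 0 0.

Lemma adjmxE {m n} (A : 'M[C]_(m, n)) i j : adjmx A i j = (A j i)^*.
Proof. by rewrite /adjmx !mxE. Qed.

Lemma adjmxM {m n p} (A : 'M[C]_(m, n)) (B : 'M[C]_(n, p)) :
  adjmx (A *m B) = adjmx B *m adjmx A.
Proof. by rewrite /adjmx map_mxM trmx_mul. Qed.

Lemma adjmxK {m n} (A : 'M[C]_(m, n)) : adjmx (adjmx A) = A.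
Proof. by apply/matrixP => i j; rewrite !adjmxE conjCK. Qed.

Lemma innerE {d} (u v : 'cV[C]_d) : inner u v = \sum_i (u i 0)^* * v i 0.
Proof. by rewrite /inner mxE; apply: eq_bigr => i _; rewrite adjmxE. Qed.

Lemma ketbraE {d} (u v : 'cV[C]_d) i j : ketbra u v i j = u i 0 * (v j 0)^*.
Proof. by rewrite /ketbra mxE big_ord1 adjmxE. Qed.

Lemma conj_inner {d} (u v : 'cV[C]_d) : (inner u v)^* = inner v u.
Proof.
rewrite !innerE rmorph_sum; apply: eq_bigr => i _.
by rewrite rmorphM /= conjCK mulrC.
Qed.

Lemma inner_sumr {d} (I : finType) (u : 'cV[C]_d) (w : I -> 'cV[C]_d) :
  inner u (\sum_i w i) = \sum_i inner u (w i).
Proof. by rewrite /inner mulmx_sumr summxE. Qed.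

Lemma inner_scaler {d} (u w : 'cV[C]_d) c : inner u (c *: w) = c * inner u w.
Proof. by rewrite /inner -scalemxAr mxE. Qed.

Lemma inner_adjmx {d} (u v : 'cV[C]_d) (A : 'M[C]_d) :
  inner u (A *m v) = inner (adjmx A *m u) v.
Proof. by rewrite /inner adjmxM adjmxK mulmxA. Qed.

Lemma inner_ketbra {d} (u v w : 'cV[C]_d) :
  inner u (ketbra v v *m w) = inner u v * inner v w.
Proof. by rewrite /inner /ketbra -mulmxA mulmxA [in LHS]mxE big_ord1. Qed.

Lemma mxtrace_ketbra {d} (u : 'cV[C]_d) (Y : 'M[C]_d) :
  \tr (ketbra u u *m Y) = inner u (Y *m u).
Proof. by rewrite /ketbra -mulmxA mxtrace_mulC trace_mx11 /inner mulmxA. Qed.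

Lemma onb_inner {d} {v : 'I_d -> 'cV[C]_d} :
  onb v -> forall i j, inner (v i) (v j) = (i == j)%:R.
Proof. by move=> v_onb i j; rewrite /inner v_onb mxE eqxx mulr1n. Qed.

(* The matrix with columns v has a left inverse, hence also a right inverse. *)
Lemma onb_sum_ketbra {d} {v : 'I_d -> 'cV[C]_d} :
  onb v -> \sum_k ketbra (v k) (v k) = 1%:M.
Proof.
move=> v_onb; pose M := \matrix_(i, k) v k i 0.
have MM1 : adjmx M *m M = 1%:M.
  apply/matrixP => i j; rewrite [RHS]mxE -(onb_inner v_onb i j) innerE mxE.
  by apply: eq_bigr => x _; rewrite adjmxE !mxE.
apply/matrixP => x y; have /matrixP/(_ x y) <- := mulmx1C MM1.
by rewrite summxE mxE; apply: eq_bigr => k _; rewrite ketbraE adjmxE !mxE.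
Qed.

Lemma parseval {d} (e : 'I_d -> 'cV[C]_d) (w : 'cV[C]_d) :
  onb e -> \sum_k `|inner (e k) w| ^+ 2 = inner w w.
Proof.
move=> e_onb; rewrite -[X in _ = inner _ X](mul1mx w) -(onb_sum_ketbra e_onb).
rewrite mulmx_suml inner_sumr.
by apply: eq_bigr => k _; rewrite inner_ketbra normCKC conj_inner.
Qed.

Lemma specop1 {d} {v : 'I_d -> 'cV[C]_d} : onb v -> specop (fun=> 1) v = 1%:M.
Proof.
move=> v_onb; rewrite -(onb_sum_ketbra v_onb); apply: eq_bigr => k _.
by rewrite /RtoC scale1r.
Qed.

Definition transition {d} (V : 'M[C]_d) (f e : 'I_d -> 'cV[C]_d) n k : C :=
  `|inner (e k) (V *m f n)| ^+ 2.

Lemma transition_doubly_stochastic {d} {V : 'M[C]_d} {f e : 'I_d -> 'cV[C]_d} :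
  qunitary V -> onb f -> onb e -> doubly_stochastic (transition V f e).
Proof.
move=> [VV1 V1V] f_onb e_onb; split=> [n k|n|k]; first exact: exprn_ge0.
  by rewrite /transition parseval // inner_adjmx mulmxA V1V mul1mx onb_inner ?eqxx.
under eq_bigr => n _ do rewrite /transition inner_adjmx -norm_conjC conj_inner.
by rewrite parseval // -inner_adjmx mulmxA VV1 mul1mx onb_inner ?eqxx.
Qed.

Lemma inner_conj_ketbra {d} (u w : 'cV[C]_d) (V : 'M[C]_d) :
  inner u (V *m ketbra w w *m adjmx V *m u) = `|inner u (V *m w)| ^+ 2.
Proof.
rewrite -2!mulmxA inner_adjmx inner_ketbra -conj_inner.
by rewrite inner_adjmx adjmxK conj_inner normCK conj_inner.
Qed.

Lemma mxtrace_specop_conj {d} (b p : 'I_d -> R) (g f : 'I_d -> 'cV[C]_d) V :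
  \tr (specop b g *m (V *m specop p f *m adjmx V)) =
  \sum_n RtoC (p n) * \sum_k RtoC (b k) * transition V f g n k.
Proof.
rewrite mulmx_suml raddf_sum /=.
under eq_bigr => k _ do rewrite -scalemxAl mxtraceZ mxtrace_ketbra mulmx_sumr
   !mulmx_suml inner_sumr mulr_sumr.
rewrite exchange_big /=; apply: eq_bigr => n _; rewrite mulr_sumr.
apply: eq_bigr => k _.
by rewrite -scalemxAr -!scalemxAl inner_scaler inner_conj_ketbra mulrCA.
Qed.

Lemma sum_mxtens {m n} (F : 'I_(m * n) -> C) :
  \sum_a F a = \sum_(i < m) \sum_(j < n) F (mxtens_index (i, j)).
Proof.
rewrite pair_big /= (reindex (@mxtens_index m n)) /=; first by apply: eq_bigr => -[].
by exists (@mxtens_unindex m n) => x _; rewrite (mxtens_indexK, mxtens_unindexK).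
Qed.

Lemma tensvE {dO dR} (u : 'cV[C]_dO) (v : 'cV[C]_dR) i j :
  tensv u v (mxtens_index (i, j)) 0 = u i 0 * v j 0.
Proof.
rewrite /tensv castmxE /= cast_ord_id mxE mxtens_indexK /=.
by congr (u _ _ * v _ _); apply: ord1.
Qed.

Lemma inner_tensv {dO dR} (a c : 'cV[C]_dO) (b e : 'cV[C]_dR) :
  inner (tensv a b) (tensv c e) = inner a c * inner b e.
Proof.
rewrite !innerE sum_mxtens mulr_suml; apply: eq_bigr => i _.
rewrite mulr_sumr; apply: eq_bigr => j _.
rewrite !tensvE rmorphM /=; ring.
Qed.

Lemma ketbra_tensv {dO dR} (a c : 'cV[C]_dO) (b e : 'cV[C]_dR) :
  ketbra (tensv a b) (tensv c e) = ketbra a c *t ketbra b e.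
Proof.
apply/matrixP => x y.
case: (mxtens_indexP x) => i j; case: (mxtens_indexP y) => k l.
rewrite tensmxE !ketbraE !tensvE rmorphM /=; ring.
Qed.

Lemma tensmx_sum {m n p q} (I J : finType)
    (A : I -> 'M[C]_(m, n)) (B : J -> 'M[C]_(p, q)) :
  (\sum_i A i) *t (\sum_j B j) = \sum_i \sum_j (A i *t B j).
Proof.
apply/matrixP => x y; rewrite mxE !summxE mulr_suml; apply: eq_bigr => i _.
by rewrite summxE mulr_sumr; apply: eq_bigr => j _; rewrite !mxE.
Qed.

Lemma tensmxZ {m n p q} (a b : C) (A : 'M[C]_(m, n)) (B : 'M[C]_(p, q)) :
  (a *: A) *t (b *: B) = (a * b) *: (A *t B).
Proof. by apply/matrixP => x y; rewrite !mxE; ring. Qed.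

Definition prod_basis {dO dR} (h : 'I_(dO * dR) -> 'I_dO * 'I_dR)
    (phi : 'I_dO -> 'cV[C]_dO) (xi : 'I_dR -> 'cV[C]_dR) n :=
  tensv (phi (h n).1) (xi (h n).2).

Lemma onb_prod_basis {dO dR} {h : 'I_(dO * dR) -> 'I_dO * 'I_dR}
    {phi : 'I_dO -> 'cV[C]_dO} {xi : 'I_dR -> 'cV[C]_dR} :
  injective h -> onb phi -> onb xi -> onb (prod_basis h phi xi).
Proof.
move=> h_inj phi_onb xi_onb i j; apply/matrixP => a b.
rewrite !ord1 [LHS]inner_tensv !onb_inner // mxE eqxx mulr1n -natrM mulnb.
by rewrite -xpair_eqE -!surjective_pairing (inj_eq h_inj).
Qed.

Lemma specop_tensmx {dO dR} {h : 'I_(dO * dR) -> 'I_dO * 'I_dR}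
    {w1 : 'I_dO -> R} {v1 : 'I_dO -> 'cV[C]_dO}
    {w2 : 'I_dR -> R} {v2 : 'I_dR -> 'cV[C]_dR} :
  bijective h ->
  specop w1 v1 *t specop w2 v2 =
  specop (fun n => w1 (h n).1 * w2 (h n).2) (prod_basis h v1 v2).
Proof.
move=> h_bij; rewrite /specop tensmx_sum pair_big (reindex h) /=; last exact: onW_bij.
by apply: eq_bigr => n _; rewrite tensmxZ ketbra_tensv /RtoC rmorphM.
Qed.

Lemma mxtrace_ptrO {dO dR} (H : 'M[C]_dR) (Y : 'M[C]_(dO * dR)) :
  \tr (H *m ptrO Y) = \tr ((1%:M *t H) *m Y).
Proof.
rewrite /mxtrace [RHS]sum_mxtens exchange_big /=; apply: eq_bigr => j _.
rewrite mxE (eq_bigr (fun k =>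
    \sum_i H j k * Y (mxtens_index (i, k)) (mxtens_index (i, j)))) => [|k _];
  last by rewrite mxE mulr_sumr.
rewrite exchange_big /=; apply: eq_bigr => i _.
rewrite mxE sum_mxtens (bigD1 i) //= [X in _ + X]big1 ?addr0.
  by apply: eq_bigr => k _; rewrite tensmxE mxE eqxx mulr1n mul1r.
move=> i' /negbTE neq_i'i; apply: big1 => k _.
by rewrite tensmxE mxE eq_sym neq_i'i mulr0n !mul0r.
Qed.

Lemma qheatE {dO dR} (HR rhoR : 'M[C]_dR) (rho V : 'M[C]_(dO * dR)) :
  qheat HR rhoR rho V =
  \tr ((1%:M *t HR) *m (V *m rho *m adjmx V)) - \tr (HR *m rhoR).
Proof. by rewrite /qheat mulmxBr raddfB /= mxtrace_ptrO. Qed.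

End InnerProduct.

Section BlockIndex.
Variables dO dR : nat.

Definition blk_inv (k : 'I_(dO * dR)) : 'I_dO * 'I_dR :=
  let ml := mxtens_unindex (cast_ord (esym (mulnC dR dO)) k) in (ml.2, ml.1).

Lemma blk_invK m l : blk_inv (blk m l) = (l, m).
Proof. by rewrite /blk_inv /blk cast_ordK mxtens_indexK. Qed.

Lemma blkK k : blk (blk_inv k).2 (blk_inv k).1 = k.
Proof.
rewrite /blk /blk_inv; case E : mxtens_unindex => [m l] /=.
by rewrite -E mxtens_unindexK cast_ordKV.
Qed.

Lemma blk_inv_bij : bijective blk_inv.
Proof. by exists (fun q => blk q.2 q.1) => [k | [l m]]; rewrite ?blkK ?blk_invK. Qed.

(* (blk_inv k).2 is k %/ dO. *)
Lemma blk_inv_homo : {homo (fun k => (blk_inv k).2) : x y / (x <= y)%N}.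
Proof. by move=> x y le_xy; exact: leq_div2r. Qed.

End BlockIndex.
Arguments blk_inv {dO dR} k.
Arguments blk_inv_bij {dO dR}.

Lemma sum_transition_blk_diag {R : realType} {dO dR}
    {phi : 'I_dO -> 'cV[R[i]]_dO} {xi : 'I_dR -> 'cV[R[i]]_dR}
    (b : 'I_dR -> R[i]) (V : 'M[R[i]]_(dO * dR)) (f : 'I_(dO * dR) -> 'cV[R[i]]_(dO * dR)) :
  onb phi -> onb xi -> qunitary V -> onb f ->
  (forall n, exists u, V *m f n = tensv u (xi (blk_inv n).2)) ->
  forall n, \sum_k b (blk_inv k).2 * transition V f (prod_basis blk_inv phi xi) n k =
            b (blk_inv n).2.
Proof.
move=> phi_onb xi_onb V_unitary f_onb V_blk n; have [u Vf] := V_blk n.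
have [_ row_sum _] := transition_doubly_stochastic V_unitary f_onb
  (onb_prod_basis (bij_inj blk_inv_bij) phi_onb xi_onb).
rewrite -[RHS]mulr1 -(row_sum n) mulr_sumr; apply: eq_bigr => k _.
rewrite /transition Vf /prod_basis inner_tensv (onb_inner xi_onb).
by case: eqP => [-> // | _]; rewrite mulr0 normr0 expr0n /= !mulr0.
Qed.

Lemma gibbsw_ge0 (R : realType) dR beta (lam : 'I_dR -> R) m :
  0 <= gibbsw beta lam m.
Proof. by rewrite divr_ge0 ?expR_ge0 ?sumr_ge0 // => k _; exact: expR_ge0. Qed.

Theorem lemma3 (R : realType) (dO dR : nat)
  (lam : 'I_dR -> R) (xi : 'I_dR -> 'cV[R[i]]_dR)
  (beta : R) (o : 'I_dO -> R) (phi : 'I_dO -> 'cV[R[i]]_dO)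
  (sigma : 'I_(dO * dR) -> 'I_dO * 'I_dR)
  (Umaj : 'M[R[i]]_(dO * dR)) :
  (* H_R = sum_m lam_m |xi_m><xi_m|, eigenvalues non-decreasing, ONB *)
  {homo lam : m1 m2 / (m1 <= m2)%N >-> m1 <= m2} ->
  onb xi ->
  0 < beta ->
  (* rho_O = sum_l o_l |phi_l><phi_l| density operator, o non-increasing *)
  (forall l, 0 <= o l) -> \sum_(l < dO) o l = 1 ->
  {homo o : l1 l2 / (l1 <= l2)%N >-> l2 <= l1} ->
  onb phi ->
  (* (p_n, psi_n) is a non-increasing rearrangement of (o_l r_m, phi_l (x) xi_m) *)
  bijective sigma ->
  {homo (fun n => o (sigma n).1 * gibbsw beta lam (sigma n).2) :
     n1 n2 / (n1 <= n2)%N >-> n2 <= n1} ->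
  let HR := specop lam xi in
  let rhoR := specop (gibbsw beta lam) xi in
  let rhoO := specop o phi in
  let rho := rhoO *t rhoR in
  let psi := fun n => tensv (phi (sigma n).1) (xi (sigma n).2) in
  qunitary Umaj ->
  (forall m : 'I_dR, exists phim : 'I_dO -> 'cV[R[i]]_dO,
      onb phim /\
      forall l : 'I_dO, Umaj *m psi (blk m l) = tensv (phim l) (xi m)) ->
  forall U : 'M[R[i]]_(dO * dR), qunitary U ->
    qheat HR rhoR rho Umaj <= qheat HR rhoR rho U.
Proof.
move=> lam_homo xi_onb _ o_ge0 _ o_homo phi_onb sigma_bij p_homo
  HR rhoR rhoO rho psi Umaj_unitary Umaj_blk U U_unitary.
pose g := prod_basis blk_inv phi xi.
pose b (k : 'I_(dO * dR)) := RtoC (lam (blk_inv k).2).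
pose p n := RtoC (o (sigma n).1 * gibbsw beta lam (sigma n).2).
have g_onb : onb g := onb_prod_basis (bij_inj blk_inv_bij) phi_onb xi_onb.
have psi_onb : onb psi := onb_prod_basis (bij_inj sigma_bij) phi_onb xi_onb.
have heatE V : qheat HR rhoR rho V =
    \sum_n p n * \sum_k b k * transition V psi g n k - \tr (HR *m rhoR).
  rewrite qheatE -(specop1 phi_onb) (specop_tensmx blk_inv_bij).
  rewrite /rho /rhoO (specop_tensmx sigma_bij) mxtrace_specop_conj.
  by under eq_bigr => n _ do under eq_bigr => k _ do rewrite mul1r.
rewrite !heatE lerD2r (eq_bigr (fun n => p n * b n)) => [|n _]; last first.
  congr (_ * _); apply: (sum_transition_blk_diag (fun m => RtoC (lam m))) => // k.
  have [phim [_ Umaj_phim]] := Umaj_blk (blk_inv k).2.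
  by exists (phim (blk_inv k).1); rewrite -Umaj_phim blkK.
apply: rearrangement_doubly_stochastic.
- exact: transition_doubly_stochastic.
- by move=> x y le_xy; rewrite lecR p_homo.
- by move=> n; rewrite lecR mulr_ge0 ?o_ge0 ?gibbsw_ge0.
- by move=> x y le_xy; rewrite lecR lam_homo ?blk_inv_homo.
Qed.
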